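(* Let $u_1\ge u_2\ge\cdots\ge u_a\ge 0$ and $w_1\ge w_2\ge\cdots\ge w_b\ge 0$ be two finite non-increasing lists (the unallocated item values and the witness item values), and set $w_r:=0$ for $r>b$. Suppose $u_r\ge w_r$ for all $r\le a$. Let $T\subseteq\{1,\dots,a\}$ and $X\subseteq\{1,\dots,b\}$ be sets of positions, and suppose there is an injective map $f:T\to X$ with $f(t)\le t$ for every $t\in T$. Delete the entries at positions in $T$ from the $u$-list and the entries at positions in $X$ from the $w$-list, and re-index the remaining entries in non-increasing order as $u'_1\ge\cdots\ge u'_{a-|T|}$ and $w'_1\ge\cdots\ge w'_{b-|X|}$ (again with $w'_r:=0$ beyond the end). Then $u'_r\ge w'_r$ for all $r\le a-|T|$.
   Context: In the paper's terminology: $U$ is the set of unallocated items and $W$ the set of items of a witness allocation; $W$ is a witness (for agent $i$) if the $r$-th largest value in $W$ is at most the $r$-th largest value in $U$ for all $r\le|U|$. Given a bundle $T$ allocated from $U$, a bundle $X\subseteq W$ is a dominance bundle for $T$ if there is an injection $f:T\to X$ such that the rank of $f(u)$ in $W$ is at most the rank of $u$ in $U$ for all $u\in T$ (rank 1 = largest). The claim says removing $T$ from $U$ and $X$ from $W$ leaves a witness. *)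

From mathcomp Require Import all_boot all_order all_algebra.
Set Implicit Arguments. Unset Strict Implicit. Unset Printing Implicit Defensive.
Import Order.TTheory GRing.Theory Num.Theory.
Local Open Scope ring_scope.

(* Lists are 0-indexed: position r of the paper is index r-1 here.
   [nth 0 w r] automatically gives w_r := 0 beyond the end. *)

Definition delete_and_resort (R : realDomainType) (s : seq R) (P : seq nat) : seq R :=
  sort (fun x y : R => y <= x)
       [seq nth 0 s i | i <- iota 0 (size s) & i \notin P].

From mathcomp Require Import all_boot all_order all_algebra.
Set Implicit Arguments. Unset Strict Implicit. Unset Printing Implicit Defensive.
Import Order.TTheory GRing.Theory Num.Theory.

(* Let p be the position in u of the r-th surviving entry. Below p exactly r
   entries of u survive, and the injection f <= id maps the deleted positions
   below p into deleted positions of w below p, so at most r entries of w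
   survive below p. Hence the r-th surviving entry of w sits at a position
   q >= p (or past the end of w), and w'_r = w_q <= w_p <= u_p = u'_r. *)

Lemma count_iota_leq (P : pred nat) k m : k <= m ->
  count P (iota 0 k) <= count P (iota 0 m).
Proof. by move=> le_km; rewrite -(subnKC le_km) iotaD count_cat leq_addr. Qed.

Lemma nth_filter_iota_ltn (P : pred nat) n k r : k <= n ->
  (nth n (filter P (iota 0 n)) r < k) = (r < count P (iota 0 k)).
Proof.
move=> le_kn.
have -> : iota 0 n = iota 0 k ++ iota k (n - k) by rewrite -{1}(subnKC le_kn) iotaD.
rewrite filter_cat nth_cat size_filter; case: (ltnP r) => [r_lt|r_ge].
  have : nth n (filter P (iota 0 k)) r \in filter P (iota 0 k).
    by apply: mem_nth; rewrite size_filter.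
  by rewrite mem_filter mem_iota => /and3P[].
case: (ltnP (r - count P (iota 0 k)) (size (filter P (iota k (n - k))))) => [lt|ge].
  move/mem_nth: lt => /(_ n); rewrite mem_filter mem_iota => /and3P[_ le_k _].
  by rewrite ltnNge le_k.
by rewrite nth_default // ltnNge le_kn.
Qed.

Lemma count_iota_nth_filter_leq (P : pred nat) n r :
  count P (iota 0 (nth n (filter P (iota 0 n)) r)) <= r.
Proof.
have le_n : nth n (filter P (iota 0 n)) r <= n.
  case: (ltnP r (size (filter P (iota 0 n)))) => [/(mem_nth n)|ge]; last first.
    by rewrite nth_default.
  by rewrite mem_filter mem_iota => /and3P[_ _ /ltnW].
by rewrite leqNgt -(@nth_filter_iota_ltn P n _ r le_n) ltnn.
Qed.

Lemma nth_filter_iota_geq (P : pred nat) n k r : count P (iota 0 k) <= r ->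
  minn k n <= nth n (filter P (iota 0 n)) r.
Proof.
move=> count_le; rewrite leqNgt nth_filter_iota_ltn ?geq_minr // -leqNgt.
exact: leq_trans (count_iota_leq P (geq_minl k n)) count_le.
Qed.

Lemma count_notin_iota (S : seq nat) p :
  count (fun i => i \notin S) (iota 0 p) = p - count (fun i => i \in S) (iota 0 p).
Proof.
by rewrite -{2}(size_iota 0 p) -(count_predC (fun i => i \in S)) addKn.
Qed.

Section SurvivingPositions.

Variables (T X : seq nat) (f : nat -> nat).
Hypothesis f_inj : {in T &, injective f}.
Hypothesis f_in_X : {in T, forall t, f t \in X}.
Hypothesis f_le : {in T, forall t, f t <= t}.

Lemma count_mem_iota_leq p :
  count (fun i => i \in T) (iota 0 p) <= count (fun i => i \in X) (iota 0 p).
Proof.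
rewrite -!size_filter -(size_map f).
apply: uniq_leq_size.
  rewrite map_inj_in_uniq ?filter_uniq ?iota_uniq //.
  by move=> x y /[!mem_filter] /andP[xT _] /andP[yT _]; apply: f_inj.
move=> _ /mapP[t /[!mem_filter] /andP[tT] /[!mem_iota] /andP[_ t_lt] ->].
by rewrite f_in_X //= (leq_ltn_trans (f_le tT)).
Qed.

Lemma surviving_positions n m r : r < n - size T ->
  let p := nth n [seq i <- iota 0 n | i \notin T] r in
  p < n /\ minn p m <= nth m [seq i <- iota 0 m | i \notin X] r.
Proof.
move=> r_lt p.
have count_T : count (fun i => i \in T) (iota 0 n) <= size T.
  rewrite -size_filter uniq_leq_size ?filter_uniq ?iota_uniq //.
  by move=> i; rewrite mem_filter => /andP[].
have r_size : r < size [seq i <- iota 0 n | i \notin T].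
  by rewrite size_filter count_notin_iota (leq_trans r_lt) ?leq_sub2l.
split.
  have : p \in [seq i <- iota 0 n | i \notin T] by exact: mem_nth.
  by rewrite mem_filter mem_iota => /and3P[].
apply: nth_filter_iota_geq.
have survT := count_iota_nth_filter_leq (fun i => i \notin T) n r.
rewrite -/p !count_notin_iota in survT *.
exact: leq_trans (leq_sub2l p (count_mem_iota_leq p)) survT.
Qed.

End SurvivingPositions.

Local Open Scope ring_scope.

Section DescendingLists.

Variable R : realDomainType.

Lemma ge_trans : transitive (fun x y : R => y <= x).
Proof. by move=> y x z le_yx le_zy; apply: le_trans le_zy le_yx. Qed.

Lemma nth_sorted_ge_padded (w : seq R) i j :
  sorted (fun x y : R => y <= x) w -> all (fun x : R => 0 <= x) w ->
  (minn i (size w) <= j)%N -> nth 0 w j <= nth 0 w i.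
Proof.
move=> w_sorted w_ge0; case: (ltnP i (size w)) => [i_lt|i_ge]; last first.
  by move=> j_ge; rewrite !nth_default.
move=> le_ij.
case: (ltnP j (size w)) => [j_lt|j_ge].
  exact: (sorted_leq_nth (leT := fun x y : R => y <= x) ge_trans).
by rewrite nth_default //; apply: (all_nthP 0 w_ge0).
Qed.

Lemma delete_and_resort_sorted (s : seq R) (P : seq nat) :
  sorted (fun x y : R => y <= x) s ->
  delete_and_resort s P = [seq nth 0 s i | i <- iota 0 (size s) & i \notin P].
Proof.
move=> s_sorted; apply: (sorted_sort ge_trans); rewrite sorted_map.
apply: sorted_filter; first by move=> ? ? ?; apply: ge_trans.
apply: (sub_in_sorted (P := gtn (size s))) (iota_sorted 0 _).
  move=> i j lt_i lt_j le_ij /=.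
  exact: (sorted_leq_nth (leT := fun x y : R => y <= x) ge_trans).
by apply/allP => i; rewrite mem_iota.
Qed.

Lemma nth_map_nth (s : seq R) (I : seq nat) r :
  nth 0 [seq nth 0 s i | i <- I] r = nth 0 s (nth (size s) I r).
Proof.
case: (ltnP r (size I)) => [lt|ge]; first by rewrite (nth_map (size s)).
by rewrite !nth_default ?size_map.
Qed.

End DescendingLists.

Theorem proposition3p4 (R : realDomainType) (u w : seq R)
  (T X : seq nat) (f : nat -> nat) :
  sorted (fun x y : R => y <= x) u -> all (fun x : R => 0 <= x) u ->
  sorted (fun x y : R => y <= x) w -> all (fun x : R => 0 <= x) w ->
  (forall r : nat, (r < size u)%N -> nth 0 w r <= nth 0 u r) ->
  uniq T -> all (fun t => t < size u)%N T ->
  uniq X -> all (fun x => x < size w)%N X ->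
  {in T &, injective f} ->
  {in T, forall t, f t \in X} ->
  {in T, forall t, f t <= t}%N ->
  forall r : nat, (r < size u - size T)%N ->
    nth 0 (delete_and_resort w X) r <= nth 0 (delete_and_resort u T) r.
Proof.
move=> u_sorted _ w_sorted w_ge0 w_le_u _ _ _ _ f_inj f_in_X f_le r r_lt.
rewrite !delete_and_resort_sorted // !nth_map_nth.
have [p_lt q_ge] := surviving_positions f_inj f_in_X f_le (size w) r_lt.
exact: le_trans (nth_sorted_ge_padded w_sorted w_ge0 q_ge) (w_le_u _ p_lt).
Qed.
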